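(* Let $(G,o)$ be a directed median graph and let $v$ be a vertex of $G$. Then: (i) $\mathcal{F}_o(v,G)$ induces a convex subgraph of $G$; (ii) the restriction of the partial order $\prec_o$ to $\mathcal{F}_o(v,G)$ coincides with the restriction of the canonical basepoint order $\le_v$ to $\mathcal{F}_o(v,G)$; (iii) $\mathcal{F}_o(v,G)$ together with $\prec_o$ is (isomorphic to) the domain of an event structure; (iv) for any vertex $u\in \mathcal{F}_o(v,G)$, the principal filter $\mathcal{F}_o(u,G)$ is included in $\mathcal{F}_o(v,G)$ and coincides with the principal filter of $u$ with respect to the order $\le_v$ restricted to $\mathcal{F}_o(v,G)$.
   Context: A graph $G$ is median if for every three vertices $x,y,z$ the set $I(x,y)\cap I(y,z)\cap I(z,x)$ is a single vertex, where $I(u,w)=\{t: d(u,t)+d(t,w)=d(u,w)\}$ and $d$ is the graph distance. A subgraph is convex if it contains $I(x,y)$ for all its vertices $x,y$. For a vertex $v$, the canonical basepoint order is $x\le_v y$ iff $x\in I(v,y)$. A directed median graph $(G,o)$ is a median graph $G$ with an orientation $o$ of its edges such that opposite edges of every 4-cycle (square) of $G$ are oriented in the same direction (when the square is traversed so that they are parallel). The relation $\prec_o$ on vertices is defined by $x\prec_o y$ iff there is a directed path (possibly of length $0$) from $x$ to $y$; it is a partial order. The principal filter of $v$ is $\mathcal{F}_o(v,G)=\{x: v\prec_o x\}$. An event structure is a triple $(E,\le,\#)$ where $E$ is a set, $\le$ is a partial order on $E$ with $\{e'\,:\,e'\le e\}$ finite for all $e$, $\#$ is an irreflexive symmetric relation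 with $e\#e'$ and $e'\le e''$ implying $e\# e''$. A configuration is a finite subset of $E$ that is downward closed for $\le$ and contains no two events in conflict; the domain of the event structure is the set of configurations ordered by inclusion. *)

From Stdlib Require Import Arith List Relations.

Set Implicit Arguments.

Definition simple_graph (V : Type) (adj : V -> V -> Prop) : Prop :=
  (forall x y, adj x y -> adj y x) /\ (forall x, ~ adj x x).

Inductive walk (V : Type) (adj : V -> V -> Prop) : V -> V -> nat -> Prop :=
| walk_nil : forall x, walk adj x x 0
| walk_cons : forall x y z n, adj x y -> walk adj y z n -> walk adj x z (S n).

Definition connected (V : Type) (adj : V -> V -> Prop) : Prop :=
  forall x y, exists n, walk adj x y n.

Definition is_dist (V : Type) (adj : V -> V -> Prop) (x y : V) (n : nat) : Prop :=
  walk adj x y n /\ (forall m, walk adj x y m -> n <= m).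

Definition interval (V : Type) (adj : V -> V -> Prop) (x y t : V) : Prop :=
  exists a b n, is_dist adj x t a /\ is_dist adj t y b /\ is_dist adj x y n /\ a + b = n.

Definition median_graph (V : Type) (adj : V -> V -> Prop) : Prop :=
  simple_graph adj /\ connected adj /\
  forall x y z, exists m,
    (interval adj x y m /\ interval adj y z m /\ interval adj z x m) /\
    forall m', interval adj x y m' -> interval adj y z m' -> interval adj z x m' -> m' = m.

Definition orientation (V : Type) (adj : V -> V -> Prop) (arc : V -> V -> Prop) : Prop :=
  (forall x y, arc x y -> adj x y) /\
  (forall x y, adj x y -> arc x y \/ arc y x) /\
  (forall x y, arc x y -> ~ arc y x).

Definition square (V : Type) (adj : V -> V -> Prop) (x1 x2 x3 x4 : V) : Prop :=
  x1 <> x2 /\ x1 <> x3 /\ x1 <> x4 /\ x2 <> x3 /\ x2 <> x4 /\ x3 <> x4 /\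
  adj x1 x2 /\ adj x2 x3 /\ adj x3 x4 /\ adj x4 x1.

(* Directed median graph: opposite edges x1x2 and x4x3 of every square are
   oriented in the same direction (applied to all labellings of the square,
   this covers both pairs of opposite edges). *)
Definition directed_median_graph (V : Type) (adj : V -> V -> Prop) (arc : V -> V -> Prop) : Prop :=
  median_graph adj /\ orientation adj arc /\
  forall x1 x2 x3 x4, square adj x1 x2 x3 x4 -> (arc x1 x2 <-> arc x4 x3).

Definition prec_o (V : Type) (arc : V -> V -> Prop) : V -> V -> Prop :=
  clos_refl_trans V arc.

Definition filter_o (V : Type) (arc : V -> V -> Prop) (v x : V) : Prop :=
  prec_o arc v x.

Definition base_le (V : Type) (adj : V -> V -> Prop) (v x y : V) : Prop :=
  interval adj v y x.

Definition convex_set (V : Type) (adj : V -> V -> Prop) (S : V -> Prop) : Prop :=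
  forall x y t, S x -> S y -> interval adj x y t -> S t.

Definition finite_set (E : Type) (P : E -> Prop) : Prop :=
  exists l : list E, forall e, P e -> In e l.

Definition event_structure (E : Type) (le : E -> E -> Prop) (conf : E -> E -> Prop) : Prop :=
  (forall e, le e e) /\
  (forall e e', le e e' -> le e' e -> e = e') /\
  (forall e e' e'', le e e' -> le e' e'' -> le e e'') /\
  (forall e, finite_set (fun e' => le e' e)) /\
  (forall e, ~ conf e e) /\
  (forall e e', conf e e' -> conf e' e) /\
  (forall e e' e'', conf e e' -> le e' e'' -> conf e e'').

Definition configuration (E : Type) (le : E -> E -> Prop) (conf : E -> E -> Prop) (C : E -> Prop) : Prop :=
  finite_set C /\
  (forall e e', C e -> le e' e -> C e') /\
  (forall e e', C e -> C e' -> ~ conf e e').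

(* (S, R) is order-isomorphic to the domain (configurations ordered by inclusion)
   of some event structure; configurations are compared extensionally. *)
Definition iso_to_es_domain (V : Type) (S : V -> Prop) (R : V -> V -> Prop) : Prop :=
  exists (E : Type) (le conf : E -> E -> Prop) (f : V -> E -> Prop),
    event_structure le conf /\
    (forall x, S x -> configuration le conf (f x)) /\
    (forall C, configuration le conf C -> exists x, S x /\ forall e, f x e <-> C e) /\
    (forall x y, S x -> S y -> (R x y <-> forall e, f x e -> f y e)).

(* In a median graph, two edges ab and xy with x closer to a and y closer to b are
   joined by a ladder of squares (the Djokovic-Winkler relation); hence they cut
   the graph into the same two halfspaces and, the orientation being constant
   on opposite sides of squares, they are oriented alike.  A directed path can
   therefore cross each hyperplane only once and only forwards, so directed
   paths starting in the filter of v are geodesics from v.  This yields the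
   convexity of the filter and the coincidence of the two orders.  The events
   are the hyperplanes crossed by arcs of the filter, and a vertex x is sent to
   the hyperplanes separating it from v.  A configuration is realized by
   removing a maximal event, realizing the rest by some y, and stepping from y
   to the nearest vertex beyond the removed hyperplane; by the quadrangle
   condition that vertex is a neighbour of y. *)

From Stdlib Require Import Arith List Relations Lia Wf_nat Classical ClassicalEpsilon
  FunctionalExtensionality PropExtensionality ProofIrrelevance.

Set Implicit Arguments.
Unset Strict Implicit.

Lemma ex_least_nat (P : nat -> Prop) :
  (exists n, P n) -> exists n, P n /\ forall m, P m -> n <= m.
Proof.
  intros HP.
  destruct (dec_inh_nat_subset_has_unique_least_element P (fun n => classic (P n)) HP)
    as (n & Hn & _).
  now exists n.
Qed.

Lemma clos_rt_exit (A : Type) (R : relation A) (P : A -> Prop) s t :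
  clos_refl_trans A R s t -> P s -> ~ P t -> exists p q, R p q /\ P p /\ ~ P q.
Proof.
  intros Hst; apply clos_rt_rt1n in Hst.
  induction Hst as [|x y z Hxy _ IH]; intros Ps Nt; [contradiction|].
  destruct (classic (P y)); eauto.
Qed.

Lemma list_maximal (A : Type) (R : A -> A -> Prop) (C : A -> Prop) (l : list A) :
  (forall x y z, R x y -> R y z -> R x z) -> (forall x y, R x y -> R y x -> x = y) ->
  (exists x, C x /\ In x l) ->
  exists m, C m /\ forall x, C x -> In x l -> R m x -> x = m.
Proof.
  intros Htrans Hanti; induction l as [|a l IH]; intros (x & Cx & Ix); [destruct Ix|].
  destruct (classic (exists x, C x /\ In x l)) as [Hl|Hl].
  - destruct (IH Hl) as (m & Cm & Hm).
    destruct (classic (C a /\ R m a)) as [(Ca & Rma)|Nma].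
    + exists a; split; [exact Ca|]; intros y Cy [<-|Iy] Ray; [reflexivity|].
      assert (y = m) as -> by exact (Hm y Cy Iy (Htrans _ _ _ Rma Ray)).
      symmetry; exact (Hanti _ _ Ray Rma).
    + exists m; split; [exact Cm|]; intros y Cy [<-|Iy] Rmy; [|exact (Hm y Cy Iy Rmy)].
      exfalso; exact (Nma (conj Cy Rmy)).
  - exists a; destruct Ix as [<-|Ix]; [|exfalso; eauto].
    split; [assumption|]; intros y Cy [<-|Iy] _; [reflexivity | exfalso; eauto].
Qed.

Section Distance.
Variables (V : Type) (adj : V -> V -> Prop).
Hypothesis adj_sym : forall x y, adj x y -> adj y x.
Hypothesis adj_irrefl : forall x, ~ adj x x.
Hypothesis adj_connected : connected adj.

Lemma walk_app x y z m n : walk adj x y m -> walk adj y z n -> walk adj x z (m + n).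
Proof. induction 1; simpl; eauto using walk_cons. Qed.

Lemma walk_rcons x y z n : walk adj x y n -> adj y z -> walk adj x z (S n).
Proof.
  intros Hxy Hyz; rewrite <- Nat.add_1_r.
  eauto using walk_app, walk_cons, walk_nil.
Qed.

Lemma walk_rev x y n : walk adj x y n -> walk adj y x n.
Proof. induction 1; eauto using walk_nil, walk_rcons. Qed.

Lemma walk0_eq x y : walk adj x y 0 -> x = y.
Proof. now inversion 1. Qed.

Lemma is_dist_exists x y : exists n, is_dist adj x y n.
Proof.
  destruct (ex_least_nat (adj_connected x y)) as (n & Hn & Hmin).
  now exists n.
Qed.

Definition dist (x y : V) : nat :=
  proj1_sig (constructive_indefinite_description _ (is_dist_exists x y)).

Lemma dist_spec x y : is_dist adj x y (dist x y).
Proof. exact (proj2_sig (constructive_indefinite_description _ _)). Qed.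

Lemma walk_dist x y : walk adj x y (dist x y).
Proof. apply dist_spec. Qed.

Lemma dist_le_walk x y n : walk adj x y n -> dist x y <= n.
Proof. apply dist_spec. Qed.

Lemma is_dist_dist x y n : is_dist adj x y n -> dist x y = n.
Proof.
  intros [Hn Hmin].
  pose proof (dist_le_walk Hn); pose proof (Hmin _ (walk_dist x y)); lia.
Qed.

Lemma dist_sym x y : dist x y = dist y x.
Proof.
  pose proof (dist_le_walk (walk_rev (walk_dist x y))).
  pose proof (dist_le_walk (walk_rev (walk_dist y x))). lia.
Qed.

Lemma dist_triangle x y z : dist x z <= dist x y + dist y z.
Proof. apply dist_le_walk, (walk_app (walk_dist x y) (walk_dist y z)). Qed.

Lemma dist_eq0 x y : dist x y = 0 -> x = y.
Proof. intros H; apply walk0_eq; rewrite <- H; apply walk_dist. Qed.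

Lemma dist_xx x : dist x x = 0.
Proof. pose proof (dist_le_walk (walk_nil adj x)); lia. Qed.

Lemma dist_adj_le z x y : adj x y -> dist z y <= S (dist z x).
Proof. intros Hxy; apply dist_le_walk, (walk_rcons (walk_dist z x) Hxy). Qed.

Lemma adj_neq x y : adj x y -> x <> y.
Proof. intros Hxy ->; exact (adj_irrefl Hxy). Qed.

Lemma dist_adj x y : adj x y -> dist x y = 1.
Proof.
  intros Hxy; pose proof (dist_adj_le x Hxy) as H; rewrite dist_xx in H.
  destruct (Nat.eq_dec (dist x y) 0) as [E|E]; [|lia].
  now apply dist_eq0, adj_neq in E.
Qed.

Lemma dist1_adj x y : dist x y = 1 -> adj x y.
Proof.
  intros H; pose proof (walk_dist x y) as Hw; rewrite H in Hw.
  inversion Hw as [|? x' ? ? Hxx' Hx'y]; subst.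
  now apply walk0_eq in Hx'y as <-.
Qed.

Lemma dist_step_first x y n : dist x y = S n -> exists x', adj x x' /\ dist x' y = n.
Proof.
  intros Hn; pose proof (walk_dist x y) as Hw; rewrite Hn in Hw.
  inversion Hw as [|? x' ? ? Hxx' Hx'y]; subst.
  exists x'; split; [assumption|].
  pose proof (dist_le_walk Hx'y); pose proof (dist_triangle x x' y).
  pose proof (dist_adj_le x Hxx'); rewrite dist_xx in *; lia.
Qed.

Lemma dist_step_last x y n : dist x y = S n -> exists y', adj y' y /\ dist x y' = n.
Proof.
  rewrite dist_sym; intros Hn.
  destruct (dist_step_first Hn) as (y' & Hyy' & Hn').
  exists y'; rewrite dist_sym; auto.
Qed.

Lemma dist_two x c y : adj x c -> adj c y -> x <> y -> ~ adj x y -> dist x y = 2.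
Proof.
  intros Hxc Hcy Nxy Axy.
  pose proof (dist_triangle x c y); rewrite (dist_adj Hxc), (dist_adj Hcy) in *.
  destruct (dist x y) as [|[|[|n]]] eqn:E; try lia.
  - now apply dist_eq0 in E.
  - now apply dist1_adj in E.
Qed.

Lemma interval_dist x y t : interval adj x y t <-> dist x t + dist t y = dist x y.
Proof.
  split.
  - intros (a & b & n & Ha & Hb & Hn & E).
    apply is_dist_dist in Ha, Hb, Hn; lia.
  - intros E; exists (dist x t), (dist t y), (dist x y); auto using dist_spec.
Qed.


Section Median.
Hypothesis median_exists_unique : forall x y z, exists m,
    (interval adj x y m /\ interval adj y z m /\ interval adj z x m) /\
    forall m', interval adj x y m' -> interval adj y z m' -> interval adj z x m' -> m' = m.

Lemma median_dist x y z : exists m,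
    (dist x m + dist m y = dist x y /\ dist y m + dist m z = dist y z /\
     dist z m + dist m x = dist z x) /\
    forall m', dist x m' + dist m' y = dist x y -> dist y m' + dist m' z = dist y z ->
      dist z m' + dist m' x = dist z x -> m' = m.
Proof.
  destruct (median_exists_unique x y z) as (m & Hm & Huniq).
  exists m; rewrite <- !interval_dist; split; [exact Hm|].
  intros m'; rewrite <- !interval_dist; apply Huniq.
Qed.

Lemma dist_adj_neq z x y : adj x y -> dist z x <> dist z y.
Proof.
  intros Hxy E.
  destruct (median_dist z x y) as (m & (Hzx & Hxy' & Hyz) & _).
  rewrite (dist_adj Hxy) in Hxy'.
  assert (m = x \/ m = y) as [-> | ->].
  { destruct (Nat.eq_dec (dist x m) 0) as [E0|E0];
      [left; symmetry; now apply dist_eq0 | right; apply dist_eq0; lia]. }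
  - rewrite (dist_sym y x), (dist_adj Hxy), (dist_sym x z), (dist_sym y z) in Hyz; lia.
  - rewrite (dist_sym y x), (dist_adj Hxy) in Hzx; lia.
Qed.

Lemma dist_adj_cases z x y : adj x y -> dist z y = S (dist z x) \/ dist z x = S (dist z y).
Proof.
  intros Hxy.
  pose proof (dist_adj_le z Hxy); pose proof (dist_adj_le z (adj_sym Hxy)).
  pose proof (dist_adj_neq (z := z) Hxy); lia.
Qed.

Lemma dist_adj_casesr z x y : adj x y -> dist y z = S (dist x z) \/ dist x z = S (dist y z).
Proof. rewrite (dist_sym y z), (dist_sym x z); apply dist_adj_cases. Qed.

Lemma dist_two_equidistant z x c y :
  adj x c -> adj c y -> x <> y -> dist z x = dist z y -> dist x y = 2.
Proof.
  intros Hxc Hcy Nxy E.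
  apply (dist_two Hxc Hcy Nxy); intros Hxy; exact (dist_adj_neq Hxy E).
Qed.

Lemma dist_two_far z x c y :
  adj x c -> adj c y -> dist z y = S (S (dist z x)) -> dist x y = 2.
Proof.
  intros Hxc Hcy E.
  apply (dist_two Hxc Hcy); [intros ->; lia|].
  intros Hxy; pose proof (dist_adj_le z Hxy); lia.
Qed.

Lemma quadrangle x y z : dist x y = 2 -> dist z x = dist z y ->
  exists u, adj x u /\ adj u y /\ S (dist z u) = dist z x.
Proof.
  intros Hxy Hz.
  destruct (median_dist x y z) as (u & (Hu1 & Hu2 & Hu3) & _).
  rewrite (dist_sym y u), (dist_sym u z), (dist_sym y z) in Hu2.
  rewrite (dist_sym u x) in Hu3.
  exists u; repeat split; [apply dist1_adj; lia | apply dist1_adj; lia | lia].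
Qed.

Lemma K23_free m m' x y z :
  adj m x -> adj m y -> adj m z -> adj m' x -> adj m' y -> adj m' z ->
  dist x y = 2 -> dist y z = 2 -> dist z x = 2 -> m = m'.
Proof.
  intros; destruct (median_dist x y z) as (c & _ & Hc).
  repeat match goal with
  | H : adj ?p ?q |- _ => pose proof (dist_adj H); pose proof (dist_adj (adj_sym H)); clear H
  end.
  transitivity c; [|symmetry]; apply Hc; lia.
Qed.

Lemma square_rev x1 x2 x3 x4 : square adj x1 x2 x3 x4 -> square adj x4 x3 x2 x1.
Proof. unfold square; intuition auto using not_eq_sym. Qed.

Lemma square_flip x1 x2 x3 x4 : square adj x1 x2 x3 x4 -> square adj x2 x1 x4 x3.
Proof. unfold square; intuition auto using not_eq_sym. Qed.

Definition halfspace (a b z : V) : Prop := dist z a < dist z b.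

Lemma halfspace_cases a b z : adj a b -> halfspace a b z \/ halfspace b a z.
Proof. intros Hab; unfold halfspace; pose proof (dist_adj_cases z Hab); lia. Qed.

Lemma square_halfspace_sub x1 x2 x3 x4 z : square adj x1 x2 x3 x4 ->
  halfspace x1 x2 z -> halfspace x4 x3 z.
Proof.
  intros (_ & N13 & _ & _ & N24 & _ & A12 & A23 & A34 & A41); unfold halfspace.
  intros H12; apply Nat.nle_gt; intros H43.
  pose proof (dist_adj_cases z A12); pose proof (dist_adj_cases z A23).
  pose proof (dist_adj_cases z A34); pose proof (dist_adj_cases z A41).
  assert (E2 : dist z x2 = S (dist z x1)) by lia.
  assert (E3 : dist z x3 = dist z x1) by lia.
  assert (E4 : dist z x4 = S (dist z x1)) by lia.
  destruct (quadrangle (dist_two_equidistant (z := z) A12 A23 N13 (eq_sym E3)) (eq_sym E3))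
    as (w & A1w & Aw3 & Ew).
  apply N13, (K23_free (x := x2) (y := x4) (z := w)); auto.
  - apply (dist_two_equidistant (z := z) (adj_sym A12) (adj_sym A41) N24); lia.
  - rewrite dist_sym; apply (dist_two_far (z := z) (adj_sym A1w) (adj_sym A41)); lia.
  - apply (dist_two_far (z := z) (adj_sym A1w) A12); lia.
Qed.

Lemma square_halfspace x1 x2 x3 x4 z : square adj x1 x2 x3 x4 ->
  halfspace x1 x2 z <-> halfspace x4 x3 z.
Proof.
  intros Hsq; split; [apply square_halfspace_sub, Hsq|].
  apply square_halfspace_sub, square_rev, Hsq.
Qed.

Lemma halfspace_neighbour_eq a b y : adj a y -> halfspace b a y -> y = b.
Proof.
  unfold halfspace; intros Hay Hy.
  rewrite (dist_sym y a), (dist_adj Hay) in Hy.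
  apply dist_eq0; lia.
Qed.

Lemma crossing_ladder a b x y k : adj a b -> adj x y ->
  halfspace a b x -> halfspace b a y -> dist x a = S k ->
  exists x' y', square adj x' y' y x /\ halfspace a b x' /\ halfspace b a y' /\ dist x' a = k.
Proof.
  unfold halfspace; intros Aab Axy Hx Hy Hk.
  destruct (dist_step_first Hk) as (x' & Axx' & Hx'a).
  pose proof (dist_adj_cases x Aab); pose proof (dist_adj_cases y Aab).
  pose proof (dist_adj_cases x' Aab); pose proof (dist_adj_casesr a Axy).
  pose proof (dist_adj_casesr b Axy); pose proof (dist_adj_casesr b Axx').
  assert (Hxb : dist x b = S (S k)) by lia.
  assert (Hya : dist y a = S (S k)) by lia.
  assert (Hyb : dist y b = S k) by lia.
  assert (Hx'b : dist x' b = S k) by lia.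
  assert (Dx'y : dist x' y = 2).
  { apply (dist_two_far (z := a) (adj_sym Axx') Axy).
    rewrite (dist_sym a y), (dist_sym a x'); lia. }
  destruct (quadrangle (z := b) Dx'y) as (m & Ax'm & Amy & Hm).
  { rewrite (dist_sym b x'), (dist_sym b y); lia. }
  rewrite (dist_sym b m), (dist_sym b x') in Hm.
  pose proof (dist_adj_casesr a Ax'm); pose proof (dist_adj_casesr a Amy).
  assert (Hma : dist m a = S k) by lia.
  exists x', m; unfold square; repeat split; auto using adj_neq, not_eq_sym; try lia.
  - intros ->; lia.
  - intros ->; lia.
Qed.

Lemma crossing_invariant (Q : V -> V -> Prop) :
  (forall x1 x2 x3 x4, square adj x1 x2 x3 x4 -> (Q x1 x2 <-> Q x4 x3)) ->
  forall a b x y, adj a b -> adj x y -> halfspace a b x -> halfspace b a y ->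
  (Q a b <-> Q x y).
Proof.
  intros HQ a b x y Hab; remember (dist x a) as k eqn:Hk; revert x y Hk.
  induction k as [|k IH]; intros x y Hk Hxy Hx Hy.
  - symmetry in Hk; apply dist_eq0 in Hk as ->.
    now rewrite (halfspace_neighbour_eq Hxy Hy).
  - destruct (crossing_ladder Hab Hxy Hx Hy (eq_sym Hk)) as (x' & y' & Hsq & Hx' & Hy' & Hk').
    pose proof Hsq as (_ & _ & _ & _ & _ & _ & Ax'y' & _).
    rewrite <- (HQ _ _ _ _ Hsq); apply IH; auto.
Qed.

Lemma crossing_halfspace a b x y : adj a b -> adj x y ->
  halfspace a b x -> halfspace b a y -> forall z, halfspace b a z <-> halfspace y x z.
Proof.
  intros Hab Hxy Hx Hy z.
  apply (crossing_invariant (Q := fun p q => halfspace q p z)); auto.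
  intros x1 x2 x3 x4 Hsq; exact (square_halfspace z (square_flip Hsq)).
Qed.

Lemma common_neighbour_avoiding a b c w : adj a b -> adj b c -> dist a c = 2 ->
  halfspace a b w -> halfspace c b w -> exists u, adj a u /\ adj u c /\ u <> b.
Proof.
  unfold halfspace; intros Hab Hbc Hac Ha Hc.
  pose proof (dist_adj_cases w Hab); pose proof (dist_adj_cases w Hbc).
  destruct (quadrangle (z := w) Hac) as (u & Hau & Huc & Hu); [lia|].
  exists u; repeat split; [assumption | assumption | intros ->; lia].
Qed.


Section Directed.
Variable arc : V -> V -> Prop.
Hypothesis arc_adj : forall x y, arc x y -> adj x y.
Hypothesis adj_arc : forall x y, adj x y -> arc x y \/ arc y x.
Hypothesis arc_asym : forall x y, arc x y -> ~ arc y x.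
Hypothesis arc_square :
  forall x1 x2 x3 x4, square adj x1 x2 x3 x4 -> (arc x1 x2 <-> arc x4 x3).

Lemma crossing_arc a b x y : adj a b -> adj x y ->
  halfspace a b x -> halfspace b a y -> (arc a b <-> arc x y).
Proof. apply (crossing_invariant arc_square). Qed.

Lemma prec_crossing_arc s t a b : prec_o arc s t -> adj a b ->
  halfspace a b s -> halfspace b a t -> arc a b.
Proof.
  intros Hst Hab Hs Ht.
  destruct (clos_rt_exit (P := halfspace a b) Hst Hs) as (p & q & Hpq & Hp & Hq).
  { unfold halfspace in *; lia. }
  destruct (halfspace_cases q Hab) as [|Hq']; [contradiction|].
  apply (crossing_arc Hab (arc_adj Hpq) Hp Hq'), Hpq.
Qed.

Section Filter.
Variable v : V.
Local Notation F := (filter_o arc v).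

Lemma filter_prec_closed x y : F x -> prec_o arc x y -> F y.
Proof. apply rt_trans. Qed.

Lemma filter_arc x y : F x -> arc x y -> F y.
Proof. intros Hx Hxy; exact (filter_prec_closed Hx (rt_step _ _ _ _ Hxy)). Qed.

Lemma filter_arc_dist u w : F u -> arc u w -> dist v w = S (dist v u).
Proof.
  intros Hu Huw.
  destruct (dist_adj_cases v (arc_adj Huw)) as [|E]; [assumption|exfalso].
  apply (arc_asym Huw), (prec_crossing_arc Hu (adj_sym (arc_adj Huw))); unfold halfspace.
  - lia.
  - rewrite dist_xx, (dist_adj (arc_adj Huw)); lia.
Qed.

Lemma filter_prec_dist x y : F x -> prec_o arc x y -> dist v y = dist v x + dist x y.
Proof.
  intros Hx Hxy; apply clos_rt_rt1n in Hxy.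
  induction Hxy as [x|x x1 y Hxx1 _ IH].
  - rewrite dist_xx; lia.
  - pose proof (IH (filter_arc Hx Hxx1)); pose proof (filter_arc_dist Hx Hxx1).
    pose proof (dist_triangle x x1 y); pose proof (dist_triangle v x y).
    rewrite (dist_adj (arc_adj Hxx1)) in *; lia.
Qed.

Lemma prec_geodesic s t x y : prec_o arc s t ->
  dist s x + dist x y + dist y t = dist s t -> prec_o arc x y.
Proof.
  intros Hst; remember (dist x y) as n eqn:Hn; revert x Hn.
  induction n as [|n IH]; intros x Hn Hgeo.
  - symmetry in Hn; apply dist_eq0 in Hn as ->; apply rt_refl.
  - destruct (dist_step_first (eq_sym Hn)) as (x' & Hxx' & Hx'y).
    pose proof (dist_triangle s x' t); pose proof (dist_triangle x' y t).
    pose proof (dist_triangle s x x'); pose proof (dist_triangle s x t).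
    pose proof (dist_sym t x); pose proof (dist_sym t x').
    rewrite (dist_adj Hxx') in *.
    apply rt_trans with x'; [apply rt_step|apply IH; lia].
    apply (prec_crossing_arc Hst Hxx'); unfold halfspace; lia.
Qed.

Lemma filter_down_closed x y : F y -> dist v x + dist x y = dist v y -> F x.
Proof. intros Hy E; apply (prec_geodesic Hy); rewrite dist_xx; lia. Qed.

Lemma filter_convex x y t : F x -> F y -> dist x t + dist t y = dist x y -> F t.
Proof.
  remember (dist x t) as n eqn:Hn; revert x Hn.
  induction n as [|n IH]; intros x Hn Hx Hy Ht.
  - symmetry in Hn; apply dist_eq0 in Hn as <-; exact Hx.
  - destruct (dist_step_first (eq_sym Hn)) as (x' & Hxx' & Hx't).
    pose proof (dist_triangle x' t y); pose proof (dist_triangle x x' y).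
    rewrite (dist_adj Hxx') in *.
    assert (Hx' : F x').
    { destruct (dist_adj_cases v Hxx') as [E|E].
      - apply (filter_arc Hx), (prec_crossing_arc Hy Hxx'); unfold halfspace.
        + lia.
        + rewrite (dist_sym y x), (dist_sym y x'); lia.
      - apply (filter_down_closed Hx); rewrite (dist_sym x' x), (dist_adj Hxx'); lia. }
    apply (IH x'); auto; lia.
Qed.

Lemma filter_convex_set : convex_set adj F.
Proof. intros x y t Hx Hy Ht; apply interval_dist in Ht; exact (filter_convex Hx Hy Ht). Qed.

Lemma filter_prec_iff_dist x y : F x -> F y ->
  (prec_o arc x y <-> dist v x + dist x y = dist v y).
Proof.
  intros Hx Hy; split.
  - intros Hxy; symmetry; exact (filter_prec_dist Hx Hxy).
  - intros E; apply (prec_geodesic Hy); rewrite dist_xx; lia.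
Qed.

Lemma filter_prec_iff_base_le x y : F x -> F y -> (prec_o arc x y <-> base_le adj v x y).
Proof. intros Hx Hy; unfold base_le; rewrite interval_dist; exact (filter_prec_iff_dist Hx Hy). Qed.

Lemma prec_iff_filter_base_le u x : F u -> (prec_o arc u x <-> F x /\ base_le adj v u x).
Proof.
  intros Hu; split.
  - intros Hux; pose proof (filter_prec_closed Hu Hux) as Hx.
    split; [exact Hx|]; apply (filter_prec_iff_base_le Hu Hx), Hux.
  - intros [Hx Hle]; apply (filter_prec_iff_base_le Hu Hx), Hle.
Qed.

(* An event is a hyperplane crossed by an arc a -> b of the filter, represented
   by the part of the filter on the side of b. *)
Definition event_of (a b z : V) : Prop := F z /\ halfspace b a z.

Definition is_event (P : V -> Prop) : Prop := exists a b, F a /\ arc a b /\ P = event_of a b.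

Definition event : Type := {P : V -> Prop | is_event P}.

Definition event_le (e e' : event) : Prop := forall z, proj1_sig e' z -> proj1_sig e z.

Definition event_conflict (e e' : event) : Prop := ~ exists z, proj1_sig e z /\ proj1_sig e' z.

Definition config_of (x : V) (e : event) : Prop := proj1_sig e x.

Lemma is_event_of a b : F a -> arc a b -> is_event (event_of a b).
Proof. now exists a, b. Qed.

Lemma event_ext (e e' : event) : (forall z, proj1_sig e z <-> proj1_sig e' z) -> e = e'.
Proof.
  destruct e as [P HP], e' as [Q HQ]; simpl; intros E.
  assert (P = Q) as <- by (extensionality z; apply propositional_extensionality, E).
  f_equal; apply proof_irrelevance.
Qed.

Lemma event_le_trans e e' e'' : event_le e e' -> event_le e' e'' -> event_le e e''.
Proof. intros H H' z Hz; exact (H z (H' z Hz)). Qed.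

Lemma event_le_antisym e e' : event_le e e' -> event_le e' e -> e = e'.
Proof. intros H H'; apply event_ext; split; auto. Qed.

Lemma event_of_head a b : F a -> arc a b -> event_of a b b.
Proof.
  intros Ha Hab; split; [exact (filter_arc Ha Hab)|].
  unfold halfspace; rewrite dist_xx, (dist_adj (adj_sym (arc_adj Hab))); lia.
Qed.

Lemma event_inhabited (e : event) : exists z, F z /\ proj1_sig e z.
Proof.
  destruct e as [P (a & b & Ha & Hab & ->)]; exists b; simpl.
  pose proof (event_of_head Ha Hab) as Hb; split; [apply Hb | exact Hb].
Qed.

Lemma config_of_base e : ~ config_of v e.
Proof.
  destruct e as [P (a & b & Ha & Hab & ->)]; intros [_ Hv]; unfold halfspace in Hv.
  pose proof (filter_arc_dist Ha Hab); lia.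
Qed.

Lemma event_of_prec_closed a b x y : arc a b -> prec_o arc x y ->
  event_of a b x -> event_of a b y.
Proof.
  intros Hab Hxy [Hx Hbx]; split; [exact (filter_prec_closed Hx Hxy)|].
  destruct (halfspace_cases y (adj_sym (arc_adj Hab))) as [|Hay]; [assumption|].
  exfalso; exact (arc_asym Hab (prec_crossing_arc Hxy (adj_sym (arc_adj Hab)) Hbx Hay)).
Qed.

Lemma event_of_exit a b y z : arc a b -> F y -> adj y z ->
  event_of a b z -> ~ event_of a b y ->
  arc y z /\ forall w, event_of a b w <-> event_of y z w.
Proof.
  intros Hab Hy Hyz [Hz Hbz] Ny.
  assert (Hay : halfspace a b y).
  { destruct (halfspace_cases y (arc_adj Hab)) as [|Hby]; [assumption|].
    exfalso; exact (Ny (conj Hy Hby)). }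
  split.
  - apply (crossing_arc (arc_adj Hab) Hyz Hay Hbz), Hab.
  - intros w; unfold event_of; rewrite (crossing_halfspace (arc_adj Hab) Hyz Hay Hbz w).
    reflexivity.
Qed.

Lemma config_of_arc y z : F y -> arc y z -> forall e,
  config_of z e <-> config_of y e \/ (forall w, proj1_sig e w <-> event_of y z w).
Proof.
  intros Hy Hyz [P (a & b & Ha & Hab & ->)]; unfold config_of; simpl; split.
  - intros Hz; destruct (classic (event_of a b y)) as [|Ny]; [left; assumption|right].
    exact (proj2 (event_of_exit Hab Hy (arc_adj Hyz) Hz Ny)).
  - intros [Hy'|E].
    + exact (event_of_prec_closed Hab (rt_step _ _ _ _ Hyz) Hy').
    + apply E, (event_of_head Hy Hyz).
Qed.

Lemma config_of_finite x : F x -> finite_set (config_of x).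
Proof.
  intros Hx; apply clos_rt_rtn1 in Hx.
  induction Hx as [|y z Hyz Hy IH].
  - exists nil; intros e He; destruct (config_of_base He).
  - apply clos_rtn1_rt in Hy; destruct IH as [l Hl].
    exists (exist _ _ (is_event_of Hy Hyz) :: l); intros e He.
    destruct (proj1 (config_of_arc Hy Hyz e) He) as [Hey|E]; [right; exact (Hl e Hey)|].
    left; apply event_ext; intros w; symmetry; exact (E w).
Qed.

Lemma events_structure : event_structure event_le event_conflict.
Proof.
  split; [|split; [|split; [|split; [|split; [|split]]]]].
  - intros e z Hz; exact Hz.
  - exact event_le_antisym.
  - exact event_le_trans.
  - intros e; destruct (event_inhabited e) as (z & Hz & Hez).
    destruct (config_of_finite Hz) as [l Hl].
    exists l; intros e' He'; apply Hl, He', Hez.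
  - intros e He; destruct (event_inhabited e) as (z & _ & Hz); exact (He (ex_intro _ z (conj Hz Hz))).
  - intros e e' He (z & Hz & Hz'); exact (He (ex_intro _ z (conj Hz' Hz))).
  - intros e e' e'' He He'' (z & Hz & Hz''); exact (He (ex_intro _ z (conj Hz (He'' z Hz'')))).
Qed.

Lemma config_of_configuration x : F x -> configuration event_le event_conflict (config_of x).
Proof.
  intros Hx; split; [exact (config_of_finite Hx)|split].
  - intros e e' He Hle; exact (Hle x He).
  - intros e e' He He' Hc; exact (Hc (ex_intro _ x (conj He He'))).
Qed.

Lemma filter_interval_of_events x y : F x -> F y ->
  (forall a b, F a -> arc a b -> event_of a b x -> event_of a b y) ->
  dist v x + dist x y = dist v y.
Proof.
  intros Hx Hy Hev.
  destruct (median_dist v x y) as (m & (Hvm & Hxm & Hym) & _).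
  destruct (dist m x) as [|k] eqn:Hmx.
  { apply dist_eq0 in Hmx as ->.
    rewrite (dist_sym y x), (dist_sym x v), (dist_sym y v) in Hym; lia. }
  destruct (dist_step_first Hmx) as (m' & Hmm' & Hm'x).
  pose proof (dist_triangle v m m'); pose proof (dist_triangle v m' x).
  pose proof (dist_triangle x m' y); pose proof (dist_adj_cases y Hmm').
  pose proof (dist_sym x m); pose proof (dist_sym x m').
  pose proof (dist_sym m y); pose proof (dist_sym m' y).
  rewrite (dist_adj Hmm') in *.
  assert (Hm : F m) by (apply (filter_down_closed Hx); lia).
  assert (Hmm'arc : arc m m').
  { apply (prec_crossing_arc Hx Hmm'); unfold halfspace; lia. }
  destruct (Hev m m' Hm Hmm'arc) as [_ Hym'].
  { split; [exact Hx|]; unfold halfspace; lia. }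
  unfold halfspace in Hym'; lia.
Qed.

Lemma prec_iff_config_incl x y : F x -> F y ->
  (prec_o arc x y <-> forall e, config_of x e -> config_of y e).
Proof.
  intros Hx Hy; split.
  - intros Hxy [P (a & b & Ha & Hab & ->)]; exact (event_of_prec_closed Hab Hxy).
  - intros Hincl; apply (filter_prec_iff_dist Hx Hy), (filter_interval_of_events Hx Hy).
    intros a b Ha Hab; exact (Hincl (exist _ _ (is_event_of Ha Hab))).
Qed.

Lemma nearest_event_point_edge c c' y z b : arc c c' -> F y ->
  event_of c c' z -> (forall z', event_of c c' z' -> dist y z <= dist y z') ->
  adj b z -> dist y z = S (dist y b) ->
  F b /\ arc b z /\ forall w, event_of c c' w <-> event_of b z w.
Proof.
  intros Hcc' Hy Hz Hmin Hbz Hyb.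
  assert (Hb : F b).
  { apply (filter_convex Hy (proj1 Hz)); rewrite (dist_adj Hbz); lia. }
  assert (Nb : ~ event_of c c' b) by (intros Hb'; pose proof (Hmin _ Hb'); lia).
  split; [exact Hb | exact (event_of_exit Hcc' Hb Hbz Hz Nb)].
Qed.

Lemma nearest_event_point_shadow c c' y z a b : arc c c' -> F y ->
  event_of c c' z -> (forall z', event_of c c' z' -> dist y z <= dist y z') ->
  adj a b -> adj b z -> dist y z = S (dist y b) -> dist y b = S (dist y a) ->
  forall w, event_of c c' w -> halfspace b a w.
Proof.
  intros Hcc' Hy Hz Hmin Hab Hbz Hyb Hya w Hw.
  destruct (nearest_event_point_edge Hcc' Hy Hz Hmin Hbz Hyb) as (_ & _ & Hcb).
  destruct (halfspace_cases w Hab) as [Haw|]; [exfalso|assumption].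
  assert (Haz : dist a z = 2) by (apply (dist_two_far (z := y) Hab Hbz); lia).
  destruct (common_neighbour_avoiding Hab Hbz Haz Haw (proj2 (proj1 (Hcb w) Hw)))
    as (u & Hau & Huz & Nub).
  pose proof (dist_adj_le y Hau); pose proof (dist_adj_le y Huz).
  assert (Hu : F u).
  { apply (filter_convex Hy (proj1 Hz)); rewrite (dist_adj Huz); lia. }
  assert (Hub : dist u b = 2).
  { apply (dist_two_equidistant (z := y) (adj_sym Hau) Hab Nub); lia. }
  assert (Hcu : event_of c c' u).
  { apply Hcb; split; [exact Hu|]; unfold halfspace; rewrite (dist_adj Huz); lia. }
  pose proof (Hmin _ Hcu); lia.
Qed.

(* If z were farther, the edge ab preceding z on a geodesic from y would carry an event
   below H (if a -> b) or in conflict with H (if b -> a). *)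
Lemma nearest_event_point_adjacent (C : event -> Prop) (H : event) c c' y z :
  configuration event_le event_conflict C -> C H ->
  (forall e, config_of y e <-> C e /\ e <> H) ->
  proj1_sig H = event_of c c' -> arc c c' -> F y ->
  event_of c c' z -> (forall z', event_of c c' z' -> dist y z <= dist y z') ->
  dist y z <= 1.
Proof.
  intros (_ & Cdown & Cconf) CH HyC EH Hcc' Hy Hz Hnear.
  apply Nat.nlt_ge; intros Hfar.
  destruct (dist_step_last (x := y) (y := z) (n := pred (dist y z)) ltac:(lia)) as (b & Hbz & Hyb).
  destruct (dist_step_last (x := y) (y := b) (n := pred (dist y b)) ltac:(lia)) as (a & Hab & Hya).
  destruct (nearest_event_point_edge Hcc' Hy Hz Hnear Hbz ltac:(lia)) as (Hb & _ & _).
  pose proof (nearest_event_point_shadow Hcc' Hy Hz Hnear Hab Hbz ltac:(lia) ltac:(lia))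
    as Hshadow.
  assert (Ha : F a) by (apply (filter_convex Hy Hb); rewrite (dist_adj Hab); lia).
  destruct (adj_arc Hab) as [Hab'|Hba].
  - set (K := exist _ _ (is_event_of Ha Hab') : event).
    assert (CK : C K).
    { apply (Cdown H K CH); intros w Hw; rewrite EH in Hw.
      exact (conj (proj1 Hw) (Hshadow w Hw)). }
    assert (NKH : K <> H).
    { intros EK; pose proof (event_of_head Ha Hab') as Hb'.
      change (proj1_sig K b) in Hb'; rewrite EK, EH in Hb'.
      pose proof (Hnear _ Hb'); lia. }
    destruct (proj2 (HyC K) (conj CK NKH)) as [_ HyK]; unfold halfspace in HyK; lia.
  - set (K := exist _ _ (is_event_of Hb Hba) : event).
    assert (HyK : config_of y K) by (split; [exact Hy | unfold halfspace; lia]).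
    apply (Cconf H K CH (proj1 (proj1 (HyC K) HyK))).
    intros (w & Hw & _ & HwK); rewrite EH in Hw.
    pose proof (Hshadow w Hw); unfold halfspace in *; lia.
Qed.

Lemma configuration_extend (C : event -> Prop) (H : event) y : F y ->
  configuration event_le event_conflict C -> C H ->
  (forall e, config_of y e <-> C e /\ e <> H) ->
  exists z, arc y z /\ forall w, proj1_sig H w <-> event_of y z w.
Proof.
  intros Hy HC CH HyC.
  destruct (proj2_sig H) as (c & c' & Hc & Hcc' & EH); rewrite EH.
  assert (Ny : ~ event_of c c' y).
  { rewrite <- EH; intros Hy'; exact (proj2 (proj1 (HyC H) Hy') eq_refl). }
  destruct (ex_least_nat (P := fun n => exists z, event_of c c' z /\ dist y z = n))
    as (k & (z & Hz & <-) & Hmin).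
  { exists (dist y c'), c'; split; [exact (event_of_head Hc Hcc') | reflexivity]. }
  assert (Hnear : forall z', event_of c c' z' -> dist y z <= dist y z')
    by (intros z' Hz'; apply Hmin; eauto).
  pose proof (nearest_event_point_adjacent HC CH HyC EH Hcc' Hy Hz Hnear).
  assert (dist y z = 0 \/ dist y z = 1) as [Hyz|Hyz] by lia.
  - apply dist_eq0 in Hyz as <-; contradiction.
  - exists z; exact (event_of_exit Hcc' Hy (dist1_adj Hyz) Hz Ny).
Qed.

Lemma configuration_remove_maximal (C : event -> Prop) (H : event) :
  configuration event_le event_conflict C ->
  (forall K, C K -> event_le H K -> K = H) ->
  configuration event_le event_conflict (fun e => C e /\ e <> H).
Proof.
  intros ([l Hl] & Cdown & Cconf) Hmax; split; [|split].
  - exists l; intros e [Ce _]; exact (Hl e Ce).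
  - intros e e' [Ce Ne] Hle; split; [exact (Cdown e e' Ce Hle)|].
    intros ->; exact (Ne (Hmax e Ce Hle)).
  - intros e e' [Ce _] [Ce' _]; exact (Cconf e e' Ce Ce').
Qed.

Definition event_eq_dec (e e' : event) : {e = e'} + {e <> e'} :=
  excluded_middle_informative (e = e').

Lemma configuration_realized n : forall (C : event -> Prop) l, length l <= n ->
  (forall e, C e -> In e l) -> configuration event_le event_conflict C ->
  exists x, F x /\ forall e, config_of x e <-> C e.
Proof.
  induction n as [|n IH]; intros C l Hn Hl HC;
    (destruct (classic (exists e, C e)) as [(e0 & Ce0)|NC];
     [|exists v; split; [apply rt_refl|]; intros e; split;
       [intros Hv; destruct (config_of_base Hv) | intros Ce; destruct (NC (ex_intro _ e Ce))]]).
  - destruct l; [destruct (Hl _ Ce0) | simpl in Hn; lia].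
  - destruct (list_maximal (C := C) (l := l) event_le_trans event_le_antisym
      (ex_intro _ e0 (conj Ce0 (Hl _ Ce0)))) as (H & CH & Hmax).
    destruct (IH (fun e => C e /\ e <> H) (remove event_eq_dec H l)) as (y & Hy & HyC).
    + pose proof (remove_length_lt event_eq_dec l H (Hl _ CH)); lia.
    + intros e [Ce Ne]; exact (in_in_remove event_eq_dec l Ne (Hl _ Ce)).
    + apply (configuration_remove_maximal HC); intros K CK; exact (Hmax K CK (Hl _ CK)).
    + destruct (configuration_extend Hy HC CH HyC) as (z & Hyz & Hz).
      exists z; split; [exact (filter_arc Hy Hyz)|]; intros e.
      rewrite (config_of_arc Hy Hyz e), HyC; split.
      * intros [[Ce _]|E]; [exact Ce|].
        replace e with H; [exact CH|].
        apply event_ext; intros w; rewrite E, Hz; reflexivity.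
      * intros Ce; destruct (classic (e = H)) as [->|Ne]; [right; exact Hz | left; auto].
Qed.

Lemma filter_event_domain : iso_to_es_domain F (prec_o arc).
Proof.
  exists event, event_le, event_conflict, config_of.
  split; [exact events_structure|split; [exact config_of_configuration|split]].
  - intros C HC; pose proof HC as ([l Hl] & _).
    exact (configuration_realized (le_n _) Hl HC).
  - exact prec_iff_config_incl.
Qed.

End Filter.
End Directed.
End Median.
End Distance.

Theorem lemma4p1 (V : Type) (adj arc : V -> V -> Prop) (v : V) :
  directed_median_graph adj arc ->
  (* (i) *)
  convex_set adj (filter_o arc v) /\
  (* (ii) *)
  (forall x y, filter_o arc v x -> filter_o arc v y ->
     (prec_o arc x y <-> base_le adj v x y)) /\
  (* (iii) *)
  iso_to_es_domain (filter_o arc v) (prec_o arc) /\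
  (* (iv) *)
  (forall u, filter_o arc v u ->
     (forall x, filter_o arc u x -> filter_o arc v x) /\
     (forall x, filter_o arc u x <-> (filter_o arc v x /\ base_le adj v u x))).
Proof.
  intros [[[Hsym Hirr] [Hconn Hmed]] [[Harc_adj [Hadj_arc Harc_asym]] Hsq]].
  split; [|split; [|split]].
  - eapply filter_convex_set; eassumption.
  - intros x y; eapply filter_prec_iff_base_le; eassumption.
  - eapply filter_event_domain; eassumption.
  - intros u Hu; split.
    + intros x; exact (filter_prec_closed Hu).
    + intros x; eapply prec_iff_filter_base_le; eassumption.
Qed.
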